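(* If a countable equivalence structure $\mathcal{A}$ has finitely many infinite equivalence classes, then $\mathcal{A}$ is relatively $\Delta^0_2$ bi-embeddably categorical.
   Context: An equivalence structure $\mathcal{A}=(A,E)$ has universe $A\subseteq\omega$ and an equivalence relation $E$ on $A$; structures are identified with their atomic diagrams. Two structures are bi-embeddable if each embeds into the other; such a structure is a bi-embeddable copy. A countable structure $\mathcal{A}$ is relatively $\Delta^0_2$ bi-embeddably categorical if for every bi-embeddable copy $\mathcal{B}$ of $\mathcal{A}$ there are embeddings $\mathcal{A}\hookrightarrow\mathcal{B}$ and $\mathcal{B}\hookrightarrow\mathcal{A}$ that are $\Delta^0_2$ relative to $\mathcal{A}\oplus\mathcal{B}$ (i.e., computable in $(\mathcal{A}\oplus\mathcal{B})'$). *)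

From Stdlib Require Import Arith Cantor.

Definition natset := nat -> Prop.

Definition join (X Y : natset) : natset :=
  fun n => if Nat.even n then X (Nat.div2 n) else Y (Nat.div2 n).

(* ---------- Oracle partial recursive functions (unary, via Cantor pairing) ---------- *)
Inductive code : Type :=
| CZero | CSucc | CId | CFst | CSnd | COracle
| CPair (f g : code)
| CComp (f g : code)
| CPrec (f g : code)          (* h <x,0> = f x ; h <x,n+1> = g << x,n >, h <x,n> > *)
| CMu (f : code).             (* x |-> least n with f <x,n> = 0 (all earlier defined) *)

Fixpoint encode (c : code) : nat :=
  match c with
  | CZero => Cantor.to_nat (0, 0)
  | CSucc => Cantor.to_nat (1, 0)
  | CId => Cantor.to_nat (2, 0)
  | CFst => Cantor.to_nat (3, 0)
  | CSnd => Cantor.to_nat (4, 0)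
  | COracle => Cantor.to_nat (5, 0)
  | CPair f g => Cantor.to_nat (6, Cantor.to_nat (encode f, encode g))
  | CComp f g => Cantor.to_nat (7, Cantor.to_nat (encode f, encode g))
  | CPrec f g => Cantor.to_nat (8, Cantor.to_nat (encode f, encode g))
  | CMu f => Cantor.to_nat (9, encode f)
  end.

Inductive eval (X : natset) : code -> nat -> nat -> Prop :=
| ev_zero x : eval X CZero x 0
| ev_succ x : eval X CSucc x (S x)
| ev_id x : eval X CId x x
| ev_fst x : eval X CFst x (fst (Cantor.of_nat x))
| ev_snd x : eval X CSnd x (snd (Cantor.of_nat x))
| ev_oracle_in x : X x -> eval X COracle x 1
| ev_oracle_out x : ~ X x -> eval X COracle x 0
| ev_pair f g x a b : eval X f x a -> eval X g x b ->
    eval X (CPair f g) x (Cantor.to_nat (a, b))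
| ev_comp f g x a b : eval X g x a -> eval X f a b -> eval X (CComp f g) x b
| ev_prec0 f g z x y : Cantor.of_nat z = (x, 0) -> eval X f x y ->
    eval X (CPrec f g) z y
| ev_precS f g z x n r y : Cantor.of_nat z = (x, S n) ->
    eval X (CPrec f g) (Cantor.to_nat (x, n)) r ->
    eval X g (Cantor.to_nat (Cantor.to_nat (x, n), r)) y ->
    eval X (CPrec f g) z y
| ev_mu f x n : eval X f (Cantor.to_nat (x, n)) 0 ->
    (forall m, m < n -> exists k, eval X f (Cantor.to_nat (x, m)) (S k)) ->
    eval X (CMu f) x n.

Definition jump (X : natset) : natset :=
  fun n => exists c, encode c = n /\ exists y, eval X c n y.

Definition computable_in (X : natset) (f : nat -> nat) : Prop :=
  exists c, forall x, eval X c x (f x).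

Definition delta02_in (X : natset) (f : nat -> nat) : Prop :=
  computable_in (jump X) f.

Record eqstr : Type := EqStr {
  univ : natset;
  E : nat -> nat -> Prop;
  E_univ : forall x y, E x y -> univ x /\ univ y;
  E_refl : forall x, univ x -> E x x;
  E_sym : forall x y, E x y -> E y x;
  E_trans : forall x y z, E x y -> E y z -> E x z
}.

(* atomic diagram of a structure, coded as a set of naturals:
   2n encodes "n in A", 2<x,y>+1 encodes "x E y" (equality is decidable) *)
Definition diag (A : eqstr) : natset :=
  fun n => if Nat.even n then univ A (Nat.div2 n)
           else let p := Cantor.of_nat (Nat.div2 n) in E A (fst p) (snd p).

Definition is_embedding (A B : eqstr) (f : nat -> nat) : Prop :=
  (forall x, univ A x -> univ B (f x)) /\
  (forall x y, univ A x -> univ A y -> f x = f y -> x = y) /\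
  (forall x y, univ A x -> univ A y -> (E A x y <-> E B (f x) (f y))).

Definition embeds (A B : eqstr) : Prop := exists f, is_embedding A B f.

Definition bi_embeddable (A B : eqstr) : Prop := embeds A B /\ embeds B A.

Definition rel_delta02_bi_emb_categorical (A : eqstr) : Prop :=
  forall B : eqstr, bi_embeddable A B ->
    (exists f, is_embedding A B f /\ delta02_in (join (diag A) (diag B)) f) /\
    (exists g, is_embedding B A g /\ delta02_in (join (diag A) (diag B)) g).

Definition infinite_class (A : eqstr) (x : nat) : Prop :=
  forall n, exists y, n <= y /\ E A x y.

(* A has finitely many infinite equivalence classes: a finite list of elements
   meets every infinite class *)
Definition finitely_many_infinite_classes (A : eqstr) : Prop :=
  exists s : list nat, forall x, univ A x -> infinite_class A x ->
    exists z, List.In z s /\ E A x z.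

(* Fix an embedding g : A -> B.  Call an A-class exceptional if it is infinite, or if it has a
   size m such that B has only finitely many classes of size >= m; g maps the latter injectively
   into finitely many B-classes, so a finite list Sp meets every exceptional class, and on these
   classes the new embedding simply follows g.  Every other A-class is finite and B has infinitely
   many classes at least as large, so, taking these A-classes in order of their least elements,
   each can be sent to a fresh, large enough B-class avoiding the images of Sp and of the earlier
   classes; the i-th element of an A-class goes to the i-th element of its target class.  Since
   "the class of x has at least m elements" is Sigma^0_1 in the diagrams, every choice is
   computable in (A (+) B)'.  For the embedding B -> A the same applies with the roles swapped,
   because an embedding B -> A sends distinct infinite B-classes into distinct infinite A-classes,
   so B too has finitely many infinite classes. *)

From Stdlib Require Import Arith Lia List Cantor Classical ClassicalEpsilon.
Import ListNotations.

Definition npair a b := Cantor.to_nat (a, b).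
Definition nfst z := fst (Cantor.of_nat z).
Definition nsnd z := snd (Cantor.of_nat z).

Lemma nfst_npair a b : nfst (npair a b) = a.
Proof. unfold nfst, npair. now rewrite Cantor.cancel_of_to. Qed.

Lemma nsnd_npair a b : nsnd (npair a b) = b.
Proof. unfold nsnd, npair. now rewrite Cantor.cancel_of_to. Qed.

Lemma npair_nfst_nsnd z : npair (nfst z) (nsnd z) = z.
Proof.
  unfold nfst, nsnd, npair. rewrite <- surjective_pairing. apply Cantor.cancel_to_of.
Qed.

Lemma to_nat_inj_pair a b c d : Cantor.to_nat (a, b) = Cantor.to_nat (c, d) -> a = c /\ b = d.
Proof. intro H. apply Cantor.to_nat_inj in H. now injection H. Qed.

Lemma encode_inj c d : encode c = encode d -> c = d.
Proof.
  revert d; induction c; destruct d; cbn [encode]; intro H;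
  repeat match goal with H : Cantor.to_nat _ = Cantor.to_nat _ |- _ =>
    apply to_nat_inj_pair in H; destruct H end;
  try discriminate; try reflexivity; subst; f_equal; auto.
Qed.

Lemma eval_prec_functional X f g :
  (forall x y1 y2, eval X f x y1 -> eval X f x y2 -> y1 = y2) ->
  (forall x y1 y2, eval X g x y1 -> eval X g x y2 -> y1 = y2) ->
  forall n x z y1 y2, Cantor.of_nat z = (x, n) ->
  eval X (CPrec f g) z y1 -> eval X (CPrec f g) z y2 -> y1 = y2.
Proof.
  intros Hf Hg n. induction n; intros x z y1 y2 Hz H1 H2;
  inversion H1; subst; inversion H2; subst; rewrite Hz in *;
  repeat match goal with H : (_, _) = (_, _) |- _ => injection H; clear H; intros; subst end;
  try discriminate.
  - eauto.
  - match goal with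
    | H4 : eval X (CPrec f g) (Cantor.to_nat (_, _)) ?r,
      H6 : eval X (CPrec f g) _ ?r0 |- _ =>
        assert (r = r0) by (eapply IHn; [apply Cantor.cancel_of_to | exact H4 | exact H6])
    end.
    subst. eauto.
Qed.

Lemma eval_functional X c x y1 y2 : eval X c x y1 -> eval X c x y2 -> y1 = y2.
Proof.
  revert x y1 y2. induction c; intros x y1 y2 H1 H2.
  9: { destruct (Cantor.of_nat x) as [a n] eqn:Ex.
       exact (eval_prec_functional X c1 c2 IHc1 IHc2 n a x y1 y2 Ex H1 H2). }
  all: inversion H1; subst; inversion H2; subst; try reflexivity; try contradiction.
  - f_equal; eauto.
  - assert (a = a0) by eauto. subst; eauto.
  - destruct (lt_eq_lt_dec y1 y2) as [[Hl|Hl]|Hl]; auto.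
    + destruct (H5 _ Hl) as [k Hk]. specialize (IHc _ _ _ H0 Hk). discriminate.
    + destruct (H3 _ Hl) as [k Hk]. specialize (IHc _ _ _ H4 Hk). discriminate.
Qed.

Definition holds (P : Prop) : bool := if excluded_middle_informative P then true else false.

Lemma holdsP (P : Prop) : reflect P (holds P).
Proof. unfold holds. destruct (excluded_middle_informative P); constructor; auto. Qed.

(* Truth is coded by [0], so that [CMu] searches for witnesses. *)
Definition chi (P : Prop) : nat := if holds P then 0 else 1.

Lemma chi_true (P : Prop) : P -> chi P = 0.
Proof. unfold chi. destruct (holdsP P); tauto. Qed.

Lemma chi_false (P : Prop) : ~ P -> chi P = 1.
Proof. unfold chi. destruct (holdsP P); tauto. Qed.

Lemma chi_iff (P Q : Prop) : (P <-> Q) -> chi P = chi Q.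
Proof. intro H. unfold chi. destruct (holdsP P), (holdsP Q); tauto. Qed.

Definition decidable_in (Y : natset) (P : nat -> Prop) : Prop :=
  computable_in Y (fun x => chi (P x)).

Definition computable2_in (Y : natset) (F : nat -> nat -> nat) : Prop :=
  computable_in Y (fun z => F (nfst z) (nsnd z)).

Definition decidable2_in (Y : natset) (P : nat -> nat -> Prop) : Prop :=
  decidable_in Y (fun z => P (nfst z) (nsnd z)).

Lemma least_witness (P : nat -> Prop) :
  (exists n, P n) -> exists n, P n /\ forall m, m < n -> ~ P m.
Proof.
  intros [n Hn]. induction n as [n IH] using (well_founded_induction lt_wf).
  destruct (classic (exists m, m < n /\ P m)) as [[m [Hm1 Hm2]]|Hno].
  - exact (IH m Hm1 Hm2).
  - exists n. split; auto. intros m Hm HP. apply Hno; eauto.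
Qed.

Lemma least_unique (P : nat -> Prop) a b : P a -> (forall m, m < a -> ~ P m) ->
  P b -> (forall m, m < b -> ~ P m) -> a = b.
Proof.
  intros Ha Ha' Hb Hb'. destruct (lt_eq_lt_dec a b) as [[H|H]|H]; auto.
  - exfalso; exact (Hb' _ H Ha).
  - exfalso; exact (Ha' _ H Hb).
Qed.

(* [mu P x] is [0] when no [n] satisfies [P x n]. *)
Definition mu (P : nat -> nat -> Prop) (x : nat) : nat :=
  match excluded_middle_informative (exists n, P x n) with
  | left H => proj1_sig (constructive_indefinite_description _ (least_witness _ H))
  | right _ => 0
  end.

Lemma mu_spec P x : (exists n, P x n) -> P x (mu P x) /\ forall m, m < mu P x -> ~ P x m.
Proof.
  intro H. unfold mu. destruct (excluded_middle_informative (exists n, P x n)); [|contradiction].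
  exact (proj2_sig (constructive_indefinite_description _ (least_witness _ e))).
Qed.

Lemma mu_ext P Q x y : (forall n, P x n <-> Q y n) -> (exists n, P x n) -> mu P x = mu Q y.
Proof.
  intros H Hex.
  assert (Hey : exists n, Q y n) by (destruct Hex as [n Hn]; exists n; apply H; auto).
  destruct (mu_spec _ _ Hex) as [H1 H2]. destruct (mu_spec _ _ Hey) as [H3 H4].
  apply (least_unique (Q y)); auto.
  - apply H; auto.
  - intros m Hm HQ. apply (H2 m Hm). apply H; auto.
Qed.

Section Computable.

Variable Y : natset.

Lemma computable_ext f g : computable_in Y f -> (forall x, f x = g x) -> computable_in Y g.
Proof. intros [c Hc] H. exists c. intro x. rewrite <- H. apply Hc. Qed.

Fixpoint const_code n : code :=
  match n with 0 => CZero | S n => CComp CSucc (const_code n) end.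

Lemma eval_const_code n x : eval Y (const_code n) x n.
Proof. induction n; simpl; econstructor; eauto; constructor. Qed.

Lemma computable_const k : computable_in Y (fun _ => k).
Proof. exists (const_code k). intro; apply eval_const_code. Qed.

Lemma computable_id : computable_in Y (fun x => x).
Proof. exists CId. intro; constructor. Qed.

Lemma computable_S : computable_in Y S.
Proof. exists CSucc. intro; constructor. Qed.

Lemma computable_nfst : computable_in Y nfst.
Proof. exists CFst. intro; constructor. Qed.

Lemma computable_nsnd : computable_in Y nsnd.
Proof. exists CSnd. intro; constructor. Qed.

Lemma computable_comp f g :
  computable_in Y f -> computable_in Y g -> computable_in Y (fun x => f (g x)).
Proof. intros [cf Hf] [cg Hg]. exists (CComp cf cg). intro x. econstructor; eauto. Qed.

Lemma computable_npair f g :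
  computable_in Y f -> computable_in Y g -> computable_in Y (fun x => npair (f x) (g x)).
Proof. intros [cf Hf] [cg Hg]. exists (CPair cf cg). intro x. constructor; eauto. Qed.

Lemma computable_app2 F f g : computable2_in Y F ->
  computable_in Y f -> computable_in Y g -> computable_in Y (fun x => F (f x) (g x)).
Proof.
  intros HF Hf Hg.
  eapply computable_ext; [exact (computable_comp _ _ HF (computable_npair _ _ Hf Hg))|].
  intro x. simpl. now rewrite nfst_npair, nsnd_npair.
Qed.

Lemma computable_oracle : computable_in Y (fun x => if holds (Y x) then 1 else 0).
Proof. exists COracle. intro x. destruct (holdsP (Y x)); constructor; auto. Qed.

Fixpoint primrec (b : nat -> nat) (s : nat -> nat -> nat) x n :=
  match n with 0 => b x | S n => s (npair x n) (primrec b s x n) end.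

Lemma computable_primrec b s :
  computable_in Y b -> computable2_in Y s -> computable2_in Y (primrec b s).
Proof.
  intros [cb Hb] [cs Hs]. exists (CPrec cb cs).
  assert (K : forall n x, eval Y (CPrec cb cs) (npair x n) (primrec b s x n)).
  { induction n; intro x; simpl.
    - eapply ev_prec0; [apply Cantor.cancel_of_to | apply Hb].
    - eapply ev_precS; [apply Cantor.cancel_of_to | apply IHn |].
      specialize (Hs (npair (npair x n) (primrec b s x n))).
      now rewrite nfst_npair, nsnd_npair in Hs. }
  intro z. rewrite <- (npair_nfst_nsnd z) at 1. apply K.
Qed.


Lemma computable_mu P : decidable2_in Y P -> (forall x, exists n, P x n) ->
  computable_in Y (mu P).
Proof.
  intros [c Hc] Hex. exists (CMu c). intro x. destruct (mu_spec _ _ (Hex x)) as [H1 H2].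
  constructor.
  - specialize (Hc (npair x (mu P x))). now rewrite nfst_npair, nsnd_npair, chi_true in Hc.
  - intros m Hm. exists 0. specialize (Hc (npair x m)).
    rewrite nfst_npair, nsnd_npair, chi_false in Hc; auto.
Qed.

Definition ifz (c a b : nat) := match c with 0 => a | S _ => b end.

Lemma computable_ifz c a b : computable_in Y c -> computable_in Y a -> computable_in Y b ->
  computable_in Y (fun x => ifz (c x) (a x) (b x)).
Proof.
  intros Hc Ha Hb.
  assert (H : computable2_in Y (primrec nfst (fun z _ => nsnd (nfst z)))).
  { apply computable_primrec; [apply computable_nfst|].
    apply (computable_comp _ _ computable_nsnd).
    apply (computable_comp _ _ computable_nfst), computable_nfst. }
  eapply computable_ext; [exact (computable_app2 _ _ _ H (computable_npair _ _ Ha Hb) Hc)|].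
  intro x. simpl. destruct (c x); simpl; now rewrite ?nfst_npair, ?nsnd_npair.
Qed.

Lemma computable_add f g :
  computable_in Y f -> computable_in Y g -> computable_in Y (fun x => f x + g x).
Proof.
  intros Hf Hg.
  assert (H : computable2_in Y (primrec (fun x => x) (fun _ a => S a))).
  { apply computable_primrec; [apply computable_id|].
    apply (computable_comp _ _ computable_S), computable_nsnd. }
  eapply computable_ext; [exact (computable_app2 _ _ _ H Hf Hg)|].
  intro x. simpl. generalize (g x). induction n; simpl; lia.
Qed.

Lemma computable_pred : computable_in Y pred.
Proof.
  assert (H : computable2_in Y (primrec (fun _ => 0) (fun z _ => nsnd z))).
  { apply computable_primrec; [apply computable_const|].
    apply (computable_comp _ _ computable_nsnd), computable_nfst. }
  eapply computable_ext; [exact (computable_app2 _ _ _ H (computable_const 0) computable_id)|].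
  intros [|x]; simpl; now rewrite ?nsnd_npair.
Qed.

Lemma computable_sub f g :
  computable_in Y f -> computable_in Y g -> computable_in Y (fun x => f x - g x).
Proof.
  intros Hf Hg.
  assert (H : computable2_in Y (primrec (fun x => x) (fun _ a => pred a))).
  { apply computable_primrec; [apply computable_id|].
    apply (computable_comp _ _ computable_pred), computable_nsnd. }
  eapply computable_ext; [exact (computable_app2 _ _ _ H Hf Hg)|].
  intro x. simpl. generalize (g x). induction n; simpl; [lia|]. rewrite IHn. lia.
Qed.

Lemma decidable_ext P Q : decidable_in Y P -> (forall x, P x <-> Q x) -> decidable_in Y Q.
Proof.
  intros H HPQ. eapply computable_ext; [exact H|]. intro x. apply chi_iff, HPQ.
Qed.

Lemma decidable_comp P f :
  decidable_in Y P -> computable_in Y f -> decidable_in Y (fun x => P (f x)).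
Proof. apply computable_comp. Qed.

Lemma decidable_nfst P : decidable_in Y P -> decidable_in Y (fun z => P (nfst z)).
Proof. intro H. exact (decidable_comp _ _ H computable_nfst). Qed.

Lemma decidable_app2 P f g : decidable2_in Y P ->
  computable_in Y f -> computable_in Y g -> decidable_in Y (fun x => P (f x) (g x)).
Proof.
  intros H Hf Hg.
  eapply decidable_ext; [exact (decidable_comp _ _ H (computable_npair _ _ Hf Hg))|].
  intro x. simpl. now rewrite nfst_npair, nsnd_npair.
Qed.

Lemma decidable_const (P : Prop) : decidable_in Y (fun _ => P).
Proof. exact (computable_const (chi P)). Qed.

Lemma decidable_not P : decidable_in Y P -> decidable_in Y (fun x => ~ P x).
Proof.
  intro H.
  eapply computable_ext.
  { exact (computable_ifz _ _ _ H (computable_const 1) (computable_const 0)). }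
  intro x. simpl. unfold chi at 1. destruct (holdsP (P x)).
  - now rewrite chi_false.
  - now rewrite chi_true.
Qed.

Lemma decidable_and P Q :
  decidable_in Y P -> decidable_in Y Q -> decidable_in Y (fun x => P x /\ Q x).
Proof.
  intros HP HQ. eapply computable_ext; [exact (computable_ifz _ _ _ HP HQ (computable_const 1))|].
  intro x. simpl. unfold chi at 1. destruct (holdsP (P x)).
  - apply chi_iff. tauto.
  - symmetry. apply chi_false. tauto.
Qed.

Lemma decidable_or P Q :
  decidable_in Y P -> decidable_in Y Q -> decidable_in Y (fun x => P x \/ Q x).
Proof.
  intros HP HQ. eapply computable_ext; [exact (computable_ifz _ _ _ HP (computable_const 0) HQ)|].
  intro x. simpl. unfold chi at 1. destruct (holdsP (P x)).
  - symmetry. apply chi_true. tauto.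
  - apply chi_iff. tauto.
Qed.

Lemma decidable_le f g :
  computable_in Y f -> computable_in Y g -> decidable_in Y (fun x => f x <= g x).
Proof.
  intros Hf Hg. eapply computable_ext.
  { exact (computable_ifz _ _ _ (computable_sub _ _ Hf Hg)
            (computable_const 0) (computable_const 1)). }
  intro x. simpl. destruct (le_lt_dec (f x) (g x)).
  - rewrite chi_true by auto. now replace (f x - g x) with 0 by lia.
  - rewrite chi_false by lia. now destruct (f x - g x) eqn:Hd; [lia|].
Qed.

Lemma decidable_eq f g :
  computable_in Y f -> computable_in Y g -> decidable_in Y (fun x => f x = g x).
Proof.
  intros Hf Hg. eapply decidable_ext.
  { exact (decidable_and _ _ (decidable_le _ _ Hf Hg) (decidable_le _ _ Hg Hf)). }
  intro x. simpl. lia.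
Qed.

Lemma decidable_oracle q : computable_in Y q -> decidable_in Y (fun x => Y (q x)).
Proof.
  intro Hq. eapply computable_ext.
  { exact (computable_ifz _ _ _ (computable_comp _ _ computable_oracle Hq)
            (computable_const 1) (computable_const 0)). }
  intro x. simpl. destruct (holdsP (Y (q x))); simpl.
  - now rewrite chi_true.
  - now rewrite chi_false.
Qed.

Lemma decidable_exists_in_list P L : decidable2_in Y P ->
  decidable_in Y (fun x => exists z, In z L /\ P x z).
Proof.
  intro H. induction L as [|a L IH].
  - eapply decidable_ext; [exact (decidable_const False)|]. firstorder.
  - eapply decidable_ext.
    { exact (decidable_or _ _ (decidable_app2 _ _ _ H computable_id (computable_const a)) IH). }
    intro x. simpl. split.
    + intros [Ha|[z [Hz1 Hz2]]]; eauto.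
    + intros [z [[Hz|Hz] Hz2]]; subst; eauto.
Qed.

Fixpoint find_map (P : nat -> nat -> Prop) (v : nat -> nat) (L : list nat) x :=
  match L with
  | [] => 0
  | z :: L => if holds (P x z) then v z else find_map P v L x
  end.

Lemma find_map_spec P v L x :
  (exists z, In z L /\ P x z) -> exists z, In z L /\ P x z /\ find_map P v L x = v z.
Proof.
  induction L as [|a L IH]; intros [z [Hz1 Hz2]]; [destruct Hz1|].
  simpl. destruct (holdsP (P x a)); [exists a; simpl; auto|].
  destruct Hz1 as [<-|Hz1]; [contradiction|].
  destruct IH as [z' [? [? ?]]]; [eauto|]. exists z'. simpl; auto.
Qed.

Lemma find_map_ext P v L x y : (forall z, P x z <-> P y z) -> find_map P v L x = find_map P v L y.
Proof.
  intro H. induction L as [|a L IH]; simpl; [reflexivity|].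
  destruct (holdsP (P x a)), (holdsP (P y a)); firstorder.
Qed.

Lemma computable_find_map P v L : decidable2_in Y P -> computable_in Y (find_map P v L).
Proof.
  intro H. induction L as [|a L IH]; simpl; [apply computable_const|].
  eapply computable_ext.
  { exact (computable_ifz _ _ _ (decidable_app2 _ _ _ H computable_id (computable_const a))
            (computable_const (v a)) IH). }
  intro x. simpl. unfold chi. now destruct (holds (P x a)).
Qed.

End Computable.

(* Searches for a [y] such that [c] outputs [0] on [<p, y>]. *)
Definition search_code (c : code) (p : nat) : code :=
  CComp (CMu (CComp c (CPair (const_code p) CSnd))) CZero.

Lemma search_code_halts Y (P : nat -> nat -> Prop) c p n :
  (forall x, eval Y c x (chi (P (nfst x) (nsnd x)))) ->
  (exists v, eval Y (search_code c p) n v) <-> exists y, P p y.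
Proof.
  intro Hc.
  assert (Hstep : forall x m, eval Y (CComp c (CPair (const_code p) CSnd)) (Cantor.to_nat (x, m))
                                (chi (P p m))).
  { intros x m. eapply ev_comp.
    - assert (Hs := ev_snd Y (Cantor.to_nat (x, m))). rewrite Cantor.cancel_of_to in Hs.
      exact (ev_pair _ _ _ _ _ _ (eval_const_code Y p _) Hs).
    - specialize (Hc (npair p m)). now rewrite nfst_npair, nsnd_npair in Hc. }
  split.
  - intros [v Hv]. inversion Hv; subst.
    match goal with H : eval Y CZero _ _ |- _ => inversion H; subst end.
    match goal with H : eval Y (CMu _) _ _ |- _ => inversion H; subst end.
    exists v.
    match goal with H : eval Y _ (Cantor.to_nat (0, v)) 0 |- _ =>
      assert (E0 := eval_functional _ _ _ _ _ H (Hstep 0 v)) end.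
    unfold chi in E0. destruct (holdsP (P p v)); [auto | discriminate].
  - intro Hex. destruct (least_witness _ Hex) as [y [Hy1 Hy2]]. exists y.
    eapply ev_comp; [constructor|]. constructor.
    + specialize (Hstep 0 y). now rewrite chi_true in Hstep.
    + intros m Hm. exists 0. specialize (Hstep 0 m). now rewrite chi_false in Hstep by auto.
Qed.

Lemma computable_encode_const_code Y : computable_in Y (fun p => encode (const_code p)).
Proof.
  assert (H : computable2_in Y (primrec (fun _ => encode CZero)
                                       (fun _ a => npair 7 (npair (encode CSucc) a)))).
  { apply computable_primrec; [apply computable_const|].
    apply computable_npair; [apply computable_const|].
    apply computable_npair; [apply computable_const | apply computable_nsnd]. }
  eapply computable_ext.
  { exact (computable_app2 _ _ _ _ H (computable_const _ 0) (computable_id _)). }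
  intro p. simpl. induction p; simpl; [reflexivity|]. now rewrite IHp.
Qed.

Lemma computable_encode_search_code Y c : computable_in Y (fun p => encode (search_code c p)).
Proof.
  apply (computable_ext _
    (fun p => npair 7 (npair (npair 9 (npair 7 (npair (encode c)
                (npair 6 (npair (encode (const_code p)) (encode CSnd)))))) (encode CZero))));
    [|reflexivity].
  repeat first
    [ apply computable_npair | apply computable_const | apply computable_encode_const_code ].
Qed.

Lemma decidable_jump_exists Y P :
  decidable2_in Y P -> decidable_in (jump Y) (fun x => exists y, P x y).
Proof.
  (* [search_code c x] ignores its input, so it halts on its own code iff it halts at all. *)
  intros [c Hc]. eapply decidable_ext.
  { exact (decidable_oracle _ _ (computable_encode_search_code (jump Y) c)). }
  intro x. unfold jump. rewrite <- (search_code_halts Y P c x (encode (search_code c x)) Hc).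
  split.
  - intros [d [Hd Hv]]. apply encode_inj in Hd. now subst d.
  - intro Hv. now exists (search_code c x).
Qed.

Lemma decidable_jump Y P : decidable_in Y P -> decidable_in (jump Y) P.
Proof.
  intro HP. eapply decidable_ext.
  { exact (decidable_jump_exists Y (fun x (_ : nat) => P x)
             (decidable_comp _ _ _ HP (computable_nfst Y))). }
  intro x. split; [intros [_ H]; exact H | intro H; now exists 0].
Qed.

Lemma computable_jump Y f : computable_in Y f -> computable_in (jump Y) f.
Proof.
  intro Hf.
  assert (Hgraph : decidable2_in (jump Y) (fun x v => f x = v)).
  { apply decidable_jump, decidable_eq.
    - exact (computable_comp _ _ _ Hf (computable_nfst Y)).
    - apply computable_nsnd. }
  eapply computable_ext; [exact (computable_mu _ _ Hgraph (fun x => ex_intro _ (f x) eq_refl))|].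
  intro x. symmetry. apply (mu_spec (fun x v => f x = v) x). now exists (f x).
Qed.

Definition count (P : nat -> Prop) (W : nat) : nat :=
  length (filter (fun v => holds (P v)) (seq 0 W)).

Lemma count_0 P : count P 0 = 0.
Proof. reflexivity. Qed.

Lemma count_S P W : count P (S W) = count P W + (if holds (P W) then 1 else 0).
Proof.
  unfold count. rewrite seq_S, filter_app, length_app. simpl.
  destruct (holds (P W)); simpl; lia.
Qed.

Lemma count_S_true P W : P W -> count P (S W) = S (count P W).
Proof. intro H. rewrite count_S. destruct (holdsP (P W)); [lia | contradiction]. Qed.

Lemma count_S_false P W : ~ P W -> count P (S W) = count P W.
Proof. intro H. rewrite count_S. destruct (holdsP (P W)); [contradiction | lia]. Qed.

Lemma count_mono P W W' : W <= W' -> count P W <= count P W'.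
Proof. induction 1; [lia|]. rewrite count_S. lia. Qed.

Lemma count_le P W : count P W <= W.
Proof. induction W; [reflexivity|]. rewrite count_S. destruct (holds (P W)); lia. Qed.

Lemma count_ext P Q W : (forall v, P v <-> Q v) -> count P W = count Q W.
Proof.
  intro H. unfold count. f_equal. apply filter_ext. intro v.
  destruct (holdsP (P v)), (holdsP (Q v)); firstorder.
Qed.

Lemma count_lt P v W : v < W -> P v -> count P v < count P W.
Proof.
  intros Hv HP. pose proof (count_mono P (S v) W Hv). rewrite count_S_true in H by auto. lia.
Qed.

Lemma count_attains P W i : S i <= count P W -> exists w, w < W /\ P w /\ count P w = i.
Proof.
  induction W as [|W IH]; intro H; [rewrite count_0 in H; lia|].
  destruct (le_lt_dec (S i) (count P W)) as [Hle|Hlt].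
  - destruct (IH Hle) as [w [? ?]]. exists w. split; [lia | auto].
  - destruct (classic (P W)) as [HP|HP].
    + exists W. rewrite count_S_true in H by auto. repeat split; auto. lia.
    + rewrite count_S_false in H by auto. lia.
Qed.

Lemma count_eq0 P W : count P W = 0 <-> forall v, v < W -> ~ P v.
Proof.
  split.
  - intros H v Hv HP. pose proof (count_lt P v W Hv HP). lia.
  - induction W as [|W IH]; intro H; [reflexivity|].
    rewrite count_S_false by (apply H; lia). apply IH. intros v Hv. apply H. lia.
Qed.

Lemma count_bounded P N : (forall v, N <= v -> ~ P v) -> forall W, count P W <= count P N.
Proof.
  intros H W. induction W as [|W IH]; [rewrite count_0; lia|].
  destruct (le_lt_dec (S W) N); [now apply count_mono|].
  rewrite count_S_false by (apply H; lia). exact IH.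
Qed.

Lemma count_unbounded P : (forall n, exists y, n <= y /\ P y) -> forall m, exists W, m <= count P W.
Proof.
  intros H m. induction m as [|m [W HW]]; [exists 0; lia|].
  destruct (H W) as [y [Hy1 Hy2]]. exists (S y).
  rewrite count_S_true by auto. pose proof (count_mono P W y Hy1). lia.
Qed.

Lemma count_witness_ge P n W : S n <= count P W -> exists v, n <= v /\ P v.
Proof.
  intro H. apply NNPP. intro Hno.
  pose proof (count_bounded P n (fun v Hv HP => Hno (ex_intro _ v (conj Hv HP))) W).
  pose proof (count_le P n). lia.
Qed.

Lemma le_list_max x l : In x l -> x <= list_max l.
Proof. intro H. exact (proj1 (Forall_forall _ l) (proj1 (list_max_le l _) (le_n _)) x H). Qed.

Lemma count_injective P Q (h : nat -> nat) :
  (forall u v, P u -> P v -> h u = h v -> u = v) -> (forall v, P v -> Q (h v)) ->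
  forall W, exists W', count P W <= count Q W'.
Proof.
  intros Hinj HPQ W.
  set (l := filter (fun v => holds (P v)) (seq 0 W)).
  assert (Hl : forall v, In v l -> P v).
  { intros v Hv. apply filter_In in Hv. destruct Hv as [_ Hv]. now destruct (holdsP (P v)). }
  exists (S (list_max (map h l))).
  unfold count. fold l. rewrite <- (length_map h l).
  apply NoDup_incl_length.
  - apply NoDup_map_NoDup_ForallPairs.
    + intros u v Hu Hv. apply Hinj; auto.
    + apply NoDup_filter, seq_NoDup.
  - intros y Hy. apply in_map_iff in Hy. destruct Hy as [v [<- Hv]].
    apply filter_In. split.
    + apply in_seq. enough (h v <= list_max (map h l)) by lia.
      apply le_list_max, in_map, Hv.
    + destruct (holdsP (Q (h v))); auto.
Qed.

Lemma computable_count Y P : decidable2_in Y P -> computable2_in Y (fun x W => count (P x) W).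
Proof.
  intro H.
  assert (Hrec : computable2_in Y (primrec (fun _ => 0)
                                   (fun z a => a + (1 - chi (P (nfst z) (nsnd z)))))).
  { apply computable_primrec; [apply computable_const|].
    apply computable_add; [apply computable_nsnd|].
    apply computable_sub; [apply computable_const|].
    exact (computable_comp _ _ _ H (computable_nfst Y)). }
  eapply computable_ext; [exact Hrec|]. intro z. simpl.
  generalize (nsnd z) as n. generalize (nfst z) as x. intros x n.
  induction n as [|n IH]; [reflexivity|]. simpl.
  rewrite count_S, IH, nfst_npair, nsnd_npair. unfold chi. destruct (holds (P x n)); simpl; lia.
Qed.

Lemma list_choice (R : nat -> nat -> Prop) L :
  exists Q, forall z, In z L -> (exists a, R z a) -> exists a, In a Q /\ R z a.
Proof.
  induction L as [|b L [Q HQ]]; [exists []; intros z []|].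
  destruct (classic (exists a, R b a)) as [[a Ha]|Hn].
  - exists (a :: Q). intros z [<-|Hz] Hex; [exists a; simpl; auto|].
    destruct (HQ z Hz Hex) as [c [? ?]]. exists c. simpl; auto.
  - exists Q. intros z [<-|Hz] Hex; [contradiction | auto].
Qed.

Definition class_ge (St : eqstr) x m := exists W, m <= count (E St x) W.

Definition class_least (St : eqstr) y := forall v, v < y -> ~ E St y v.

Definition covered (St : eqstr) (L : list nat) x := exists z, In z L /\ E St x z.

Section EquivalenceStructure.

Variable St : eqstr.

Lemma E_refl_ends x y : E St x y -> E St x x /\ E St y y.
Proof. intro H. destruct (E_univ St x y H). split; apply E_refl; auto. Qed.

Lemma E_same_class x y : E St x y -> forall v, E St x v <-> E St y v.
Proof.
  intros H v. split; intro H'.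
  - apply (E_trans St _ x); auto. now apply E_sym.
  - now apply (E_trans St _ y).
Qed.

Lemma count_E x y W : E St x y -> count (E St x) W = count (E St y) W.
Proof. intro H. apply count_ext, E_same_class, H. Qed.

Lemma class_ge_E x y m : E St x y -> class_ge St x m -> class_ge St y m.
Proof. intros H [W HW]. exists W. now rewrite <- (count_E x y W H). Qed.

Lemma class_ge_mono x m m' : m' <= m -> class_ge St x m -> class_ge St x m'.
Proof. intros H [W HW]. exists W. lia. Qed.

Lemma class_ge0 x : class_ge St x 0.
Proof. exists 0. lia. Qed.

Lemma class_ge_rank x : E St x x -> class_ge St x (S (count (E St x) x)).
Proof. intro H. exists (S x). now rewrite count_S_true. Qed.

Lemma finite_class_bounded x : ~ infinite_class St x -> exists m, ~ class_ge St x m.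
Proof.
  intro Hfin.
  assert (HN : exists N, forall y, N <= y -> ~ E St x y).
  { apply NNPP. intro H. apply Hfin. intro n. apply NNPP. intro H'. apply H. exists n.
    intros y Hy Hxy. apply H'. eauto. }
  destruct HN as [N HN]. exists (S (count (E St x) N)). intros [W HW].
  pose proof (count_bounded _ _ HN W). lia.
Qed.

Lemma class_least_exists x : E St x x -> exists j, E St x j /\ E St j j /\ class_least St j.
Proof.
  intro H. destruct (least_witness (E St x)) as [j [Hj1 Hj2]]; [eauto|].
  exists j. repeat split; auto.
  - apply (E_trans St _ x); auto. now apply E_sym.
  - intros v Hv Hjv. apply (Hj2 v Hv). now apply (E_trans St _ j).
Qed.

Lemma class_least_le y z : class_least St y -> E St y z -> y <= z.
Proof. intros H Hz. destruct (le_lt_dec y z); auto. exfalso. now apply (H z). Qed.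

Lemma class_least_unique y z : class_least St y -> class_least St z -> E St y z -> y = z.
Proof.
  intros Hy Hz H. pose proof (class_least_le y z Hy H).
  pose proof (class_least_le z y Hz (E_sym St _ _ H)). lia.
Qed.

Lemma covered_E L x y : E St x y -> covered St L x <-> covered St L y.
Proof.
  intro H. unfold covered.
  split; intros [z [? ?]]; exists z; split; auto; now apply (E_same_class x y H).
Qed.

Lemma decidable_E_diag Y : decidable2_in Y (E St) -> decidable_in Y (fun x => E St x x).
Proof. intro H. exact (decidable_app2 _ _ _ _ H (computable_id Y) (computable_id Y)). Qed.

Lemma decidable_class_least Y : decidable2_in Y (E St) -> decidable_in Y (class_least St).
Proof.
  intro H. eapply decidable_ext.
  { apply decidable_eq; [|apply computable_const].
    exact (computable_app2 _ _ _ _ (computable_count Y _ H) (computable_id Y) (computable_id Y)). }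
  intro y. simpl. now rewrite count_eq0.
Qed.

Lemma decidable_class_ge Y : decidable2_in Y (E St) -> decidable2_in (jump Y) (class_ge St).
Proof.
  intro H. apply decidable_jump_exists, decidable_le.
  - exact (computable_comp _ _ _ (computable_nsnd Y) (computable_nfst Y)).
  - apply (computable_app2 _ _ _ _ (computable_count Y _ H)).
    + exact (computable_comp _ _ _ (computable_nfst Y) (computable_nfst Y)).
    + apply computable_nsnd.
Qed.

Lemma decidable_covered Y L : decidable2_in Y (E St) -> decidable_in Y (covered St L).
Proof. apply decidable_exists_in_list. Qed.

End EquivalenceStructure.

Definition unbounded_classes_ge (St : eqstr) m :=
  forall k, exists y, k <= y /\ E St y y /\ class_least St y /\ class_ge St y m.

Definition covers_exceptions (A B : eqstr) (Sp : list nat) :=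
  forall x, E A x x -> ~ covered A Sp x ->
    (exists m, ~ class_ge A x m) /\ forall m, class_ge A x m -> unbounded_classes_ge B m.

Section Embedding.

Variables A B : eqstr.
Variable g : nat -> nat.
Hypothesis Hg : is_embedding A B g.

Lemma class_ge_embedding x m : E A x x -> class_ge A x m -> class_ge B (g x) m.
Proof.
  intros Hx [W HW]. destruct Hg as [H1 [H2 H3]].
  assert (Ux : univ A x) by exact (proj1 (E_univ A x x Hx)).
  destruct (count_injective (E A x) (E B (g x)) g) with (W := W) as [W' HW'].
  - intros u v Hu Hv. apply H2; eapply E_univ; eauto.
  - intros v Hv. apply H3; auto. eapply E_univ; eauto.
  - exists W'. lia.
Qed.

Lemma infinite_class_embedding x : univ A x -> infinite_class A x -> infinite_class B (g x).
Proof.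
  intros Ux Ix n. destruct (count_unbounded _ Ix (S n)) as [W HW].
  destruct (class_ge_embedding x (S n) (E_refl A x Ux) (ex_intro _ W HW)) as [W' HW'].
  exact (count_witness_ge _ _ _ HW').
Qed.

Lemma finitely_many_infinite_classes_embedding :
  finitely_many_infinite_classes B -> finitely_many_infinite_classes A.
Proof.
  intros [s Hs].
  destruct (list_choice (fun z a => univ A a /\ E B (g a) z) s) as [Q HQ].
  exists Q. intros x Ux Ix. destruct Hg as [H1 [_ H3]].
  destruct (Hs (g x) (H1 x Ux) (infinite_class_embedding x Ux Ix)) as [z [Hz1 Hz2]].
  destruct (HQ z Hz1) as [a [Ha1 [Ha2 Ha3]]]; [now exists x|].
  exists a. split; auto. apply H3; auto. apply (E_trans B _ z); auto. now apply E_sym.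
Qed.

Lemma scarce_classes_covered : exists Q, forall x, E A x x ->
  (exists m, class_ge A x m /\ ~ unbounded_classes_ge B m) -> covered A Q x.
Proof.
  destruct (classic (exists m, ~ unbounded_classes_ge B m)) as [Hm|Hm].
  2: { exists []. intros x _ [m [_ Hc]]. exfalso. eauto. }
  (* Scarce classes have size at least the least scarce size m0, and B has no class of size m0
     with least element beyond some k: pick, for each j < k, an A-class mapped into that of j. *)
  destruct (least_witness _ Hm) as [m0 [Hm0 Hm0']].
  assert (Hk : exists k, forall y, k <= y -> ~ (E B y y /\ class_least B y /\ class_ge B y m0)).
  { apply NNPP. intro Hn. apply Hm0. intro k. apply NNPP. intro Hn2. apply Hn. exists k.
    intros y Hy Hc. apply Hn2. exists y. tauto. }
  destruct Hk as [k Hk].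
  destruct (list_choice (fun j a => E A a a /\ class_ge A a m0 /\ E B j (g a)) (seq 0 k)) as [Q HQ].
  exists Q. intros x Hx [m [Hge HI]].
  assert (Hle : m0 <= m) by (destruct (le_lt_dec m0 m); [auto | exfalso; now apply (Hm0' m)]).
  assert (Hx0 : class_ge A x m0) by (eapply class_ge_mono; eauto).
  assert (Hgx : class_ge B (g x) m0) by (apply class_ge_embedding; auto).
  destruct Hg as [H1 [_ H3]].
  assert (Ux : univ A x) by exact (proj1 (E_univ A x x Hx)).
  destruct (class_least_exists B (g x) (E_refl B _ (H1 x Ux))) as [j [Hj1 [Hj2 Hj3]]].
  assert (Hjk : j < k).
  { destruct (le_lt_dec k j); auto. exfalso. apply (Hk j); auto.
    repeat split; auto. now apply (class_ge_E B (g x)). }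
  destruct (HQ j) as [a [Ha1 [Ha2 [_ Ha4]]]].
  { apply in_seq. lia. }
  { exists x. repeat split; auto. now apply E_sym. }
  exists a. split; auto. apply H3; auto.
  - exact (proj1 (E_univ A a a Ha2)).
  - now apply (E_trans B _ j).
Qed.

Lemma covers_exceptions_exists :
  finitely_many_infinite_classes A -> exists Sp, covers_exceptions A B Sp.
Proof.
  intros [s Hs]. destruct scarce_classes_covered as [Q HQ].
  exists (s ++ Q). intros x Hx Hn. split.
  - apply finite_class_bounded. intro Hi.
    destruct (Hs x (proj1 (E_univ A x x Hx)) Hi) as [z [? ?]].
    apply Hn. exists z. split; auto. apply in_or_app; auto.
  - intros m Hm. apply NNPP. intro HI. destruct (HQ x Hx) as [z [? ?]]; eauto.
    apply Hn. exists z. split; auto. apply in_or_app; auto.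
Qed.

End Embedding.

Definition fresh_class (St : eqstr) (L : list nat) y m :=
  E St y y /\ class_least St y /\ ~ covered St L y /\ class_ge St y m.

Lemma fresh_class_unbounded St m L :
  unbounded_classes_ge St m -> forall k, exists y, k <= y /\ fresh_class St L y m.
Proof.
  intros HI k. destruct (HI (max k (S (list_max L)))) as [y [Hy1 [Hy2 [Hy3 Hy4]]]].
  exists y. split; [lia|]. repeat split; auto.
  intros [z [Hz1 Hz2]]. pose proof (class_least_le St y z Hy3 Hz2).
  pose proof (le_list_max z L Hz1). lia.
Qed.

Lemma decidable_fresh_class Y St L :
  decidable2_in Y (E St) -> decidable2_in (jump Y) (fresh_class St L).
Proof.
  intro H. repeat apply decidable_and.
  - apply decidable_jump, (decidable_nfst _ (fun y => E St y y)), decidable_E_diag, H.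
  - apply decidable_jump, (decidable_nfst _ (class_least St)), decidable_class_least, H.
  - apply decidable_jump, (decidable_nfst _ (fun y => ~ covered St L y)).
    apply decidable_not, decidable_covered, H.
  - now apply decidable_class_ge.
Qed.

Section Construction.

Variables A B : eqstr.
Variable g : nat -> nat.
Variable Sp : list nat.
Hypothesis Hg : is_embedding A B g.
Hypothesis HSp : covers_exceptions A B Sp.

Definition special_image x := find_map (E A) g Sp x.

(* The disjuncts [~ E A x x] make the searches below total, as [computable_mu] requires. *)
Definition least_rep x := mu (fun x v => E A x v \/ ~ E A x x) x.

Definition class_size x :=
  mu (fun x m => covered A Sp x \/ ~ E A x x \/ ~ class_ge A x (S m)) x.

Definition is_rep r := E A r r /\ ~ covered A Sp r /\ least_rep r = r.

(* [next_fresh <r, lo>]: the least element, at least [lo], of a [B]-class disjoint from the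
   image of [Sp] and at least as large as the [A]-class of the representative [r]. *)
Definition next_fresh w :=
  mu (fun w y => ~ is_rep (nfst w) \/
                 (nsnd w <= y /\ fresh_class B (map g Sp) y (class_size (nfst w)))) w.

(* [threshold n] exceeds the targets chosen for the representatives below [n], so that distinct
   representatives get distinct targets. *)
Fixpoint threshold n :=
  match n with
  | 0 => 0
  | S n => if holds (is_rep n) then S (next_fresh (npair n (threshold n))) else threshold n
  end.

Definition target x :=
  if holds (covered A Sp x) then special_image x
  else next_fresh (npair (least_rep x) (threshold (least_rep x))).

Definition rank x := count (E A x) x.

Definition emb x :=
  mu (fun x w => ~ E A x x \/ (E B (target x) w /\ count (E B (target x)) w = rank x)) x.

Lemma special_image_spec x :
  covered A Sp x -> exists z, In z Sp /\ E A x z /\ special_image x = g z.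
Proof. apply find_map_spec. Qed.

Lemma special_image_E x y : E A x y -> special_image x = special_image y.
Proof. intro H. apply find_map_ext, E_same_class, H. Qed.

Lemma least_rep_spec x : E A x x -> E A x (least_rep x) /\ forall v, v < least_rep x -> ~ E A x v.
Proof.
  intro H. destruct (mu_spec (fun x v => E A x v \/ ~ E A x x) x) as [H1 H2]; [exists x; auto|].
  split; [destruct H1; tauto|]. intros v Hv Hc. apply (H2 v Hv). auto.
Qed.

Lemma least_rep_E x y : E A x y -> least_rep x = least_rep y.
Proof.
  intro H. destruct (E_refl_ends A x y H). apply mu_ext; [|exists x; auto].
  intro n. pose proof (E_same_class A x y H n). tauto.
Qed.

Lemma is_rep_least_rep x : E A x x -> ~ covered A Sp x -> is_rep (least_rep x).
Proof.
  intros H Hn. destruct (least_rep_spec x H) as [H1 _]. destruct (E_refl_ends A _ _ H1).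
  split; auto. split.
  - now rewrite <- (covered_E A Sp _ _ H1).
  - symmetry. now apply least_rep_E.
Qed.

Lemma class_size_spec x : E A x x -> ~ covered A Sp x ->
  class_ge A x (class_size x) /\ ~ class_ge A x (S (class_size x)).
Proof.
  intros H Hn. unfold class_size.
  destruct (mu_spec (fun x m => covered A Sp x \/ ~ E A x x \/ ~ class_ge A x (S m)) x) as [H1 H2].
  { destruct (HSp x H Hn) as [[[|m] Hm] _]; [exfalso; apply Hm, class_ge0 | eauto]. }
  split; [|tauto].
  destruct (mu _ x) as [|n]; [apply class_ge0|].
  apply NNPP. intro Hc. apply (H2 n); auto.
Qed.

Lemma next_fresh_spec r lo : is_rep r ->
  lo <= next_fresh (npair r lo) /\
  fresh_class B (map g Sp) (next_fresh (npair r lo)) (class_size r).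
Proof.
  intros [H1 [H2 H3]]. unfold next_fresh.
  destruct (mu_spec (fun w y => ~ is_rep (nfst w) \/
               (nsnd w <= y /\ fresh_class B (map g Sp) y (class_size (nfst w))))
             (npair r lo)) as [K _].
  { destruct (HSp r H1 H2) as [_ HI]. destruct (class_size_spec r H1 H2) as [Hge _].
    destruct (fresh_class_unbounded B _ (map g Sp) (HI _ Hge) lo) as [y [? ?]].
    exists y. right. now rewrite nfst_npair, nsnd_npair. }
  rewrite nfst_npair, nsnd_npair in K. destruct K as [K|K]; [exfalso; apply K; now split|auto].
Qed.

Lemma threshold_rep r : is_rep r -> threshold (S r) = S (next_fresh (npair r (threshold r))).
Proof. intro H. simpl. now destruct (holdsP (is_rep r)). Qed.

Lemma threshold_mono n m : n <= m -> threshold n <= threshold m.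
Proof.
  induction 1 as [|m _ IH]; [lia|]. simpl. destruct (holdsP (is_rep m)) as [Hr|]; [|lia].
  pose proof (proj1 (next_fresh_spec m (threshold m) Hr)). lia.
Qed.

Lemma fresh_target_injective r r' : is_rep r -> is_rep r' ->
  E B (next_fresh (npair r (threshold r))) (next_fresh (npair r' (threshold r'))) -> r = r'.
Proof.
  intros Hr Hr' H.
  destruct (next_fresh_spec r (threshold r) Hr) as [Lr [_ [Mr _]]].
  destruct (next_fresh_spec r' (threshold r') Hr') as [Lr' [_ [Mr' _]]].
  pose proof (class_least_unique B _ _ Mr Mr' H).
  destruct (lt_eq_lt_dec r r') as [[Lt|Eq]|Lt]; auto; exfalso.
  - pose proof (threshold_mono (S r) r' Lt). rewrite threshold_rep in * by auto. lia.
  - pose proof (threshold_mono (S r') r Lt). rewrite threshold_rep in * by auto. lia.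
Qed.

Lemma fresh_target_not_special r z : is_rep r -> In z Sp ->
  ~ E B (next_fresh (npair r (threshold r))) (g z).
Proof.
  intros Hr Hz H. destruct (next_fresh_spec r (threshold r) Hr) as [_ [_ [_ [Hn _]]]].
  apply Hn. exists (g z). split; auto. now apply in_map.
Qed.

Lemma target_E x y : E A x y -> target x = target y.
Proof.
  intro H. unfold target. pose proof (covered_E A Sp x y H).
  destruct (holdsP (covered A Sp x)), (holdsP (covered A Sp y)); try tauto.
  - now apply special_image_E.
  - now rewrite (least_rep_E x y H).
Qed.

Lemma class_ge_target x : E A x x -> class_ge B (target x) (S (rank x)).
Proof.
  intro H. pose proof (class_ge_rank A x H) as Hrank. fold (rank x) in Hrank. unfold target.
  destruct (holdsP (covered A Sp x)) as [Hc|Hc].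
  - destruct (special_image_spec x Hc) as [z [_ [Hz1 ->]]].
    apply (class_ge_embedding A B g Hg); [exact (proj2 (E_refl_ends A x z Hz1))|].
    now apply (class_ge_E A x).
  - destruct (least_rep_spec x H) as [Hr _].
    pose proof (is_rep_least_rep x H Hc) as Hir. pose proof Hir as [Hr1 [Hr2 _]].
    destruct (next_fresh_spec _ (threshold (least_rep x)) Hir) as [_ [_ [_ [_ Hge]]]].
    destruct (class_size_spec _ Hr1 Hr2) as [_ Hlt].
    apply (class_ge_mono _ _ (class_size (least_rep x))); auto.
    destruct (le_lt_dec (S (rank x)) (class_size (least_rep x))); auto. exfalso. apply Hlt.
    apply (class_ge_mono _ _ (S (rank x))); [lia|]. now apply (class_ge_E A x).
Qed.

Lemma emb_spec x : E A x x -> E B (target x) (emb x) /\ count (E B (target x)) (emb x) = rank x.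
Proof.
  intro H. unfold emb.
  destruct (mu_spec (fun x w => ~ E A x x \/
              (E B (target x) w /\ count (E B (target x)) w = rank x)) x) as [K _].
  { destruct (class_ge_target x H) as [W HW]. destruct (count_attains _ _ _ HW) as [w [_ [? ?]]].
    exists w. now right. }
  destruct K; [contradiction | auto].
Qed.

Lemma target_injective x y : E A x x -> E A y y -> E B (target x) (target y) -> E A x y.
Proof.
  intros Hx Hy H. destruct Hg as [_ [_ G3]]. unfold target in H.
  destruct (holdsP (covered A Sp x)) as [Sx|Sx], (holdsP (covered A Sp y)) as [Sy|Sy].
  - destruct (special_image_spec x Sx) as [z [_ [Z1 Z2]]].
    destruct (special_image_spec y Sy) as [z' [_ [Z1' Z2']]].
    rewrite Z2, Z2' in H. destruct (E_refl_ends A _ _ Z1), (E_refl_ends A _ _ Z1').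
    apply G3 in H; try (eapply E_univ; eauto).
    apply (E_trans A _ z); auto. apply (E_trans A _ z'); auto. now apply E_sym.
  - destruct (special_image_spec x Sx) as [z [Zin [_ Z2]]]. rewrite Z2 in H.
    exfalso. apply (fresh_target_not_special _ z (is_rep_least_rep y Hy Sy) Zin). now apply E_sym.
  - destruct (special_image_spec y Sy) as [z [Zin [_ Z2]]]. rewrite Z2 in H.
    exfalso. exact (fresh_target_not_special _ z (is_rep_least_rep x Hx Sx) Zin H).
  - pose proof (fresh_target_injective _ _
                  (is_rep_least_rep x Hx Sx) (is_rep_least_rep y Hy Sy) H) as Hr.
    destruct (least_rep_spec x Hx) as [Rx _]. destruct (least_rep_spec y Hy) as [Ry _].
    rewrite Hr in Rx. apply (E_trans A _ (least_rep y)); auto. now apply E_sym.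
Qed.

Lemma emb_is_embedding : is_embedding A B emb.
Proof.
  split; [|split].
  - intros x Ux. destruct (emb_spec x (E_refl A x Ux)) as [H _]. exact (proj2 (E_univ B _ _ H)).
  - intros x y Ux Uy Hxy.
    pose proof (E_refl A x Ux) as Hx. pose proof (E_refl A y Uy) as Hy.
    destruct (emb_spec x Hx) as [F1 F2]. destruct (emb_spec y Hy) as [F3 F4].
    assert (Cxy : E A x y).
    { apply target_injective; auto. rewrite <- Hxy in F3.
      apply (E_trans B _ (emb x)); auto. now apply E_sym. }
    rewrite (target_E x y Cxy) in F2. rewrite <- Hxy, F2 in F4.
    unfold rank in F4. rewrite (count_E A x y x Cxy) in F4.
    destruct (lt_eq_lt_dec x y) as [[Lt|Eq]|Lt]; auto; exfalso.
    + pose proof (count_lt (E A y) x y Lt (E_sym A _ _ Cxy)). lia.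
    + pose proof (count_lt (E A y) y x Lt Hy). lia.
  - intros x y Ux Uy.
    pose proof (E_refl A x Ux) as Hx. pose proof (E_refl A y Uy) as Hy.
    destruct (emb_spec x Hx) as [F1 _]. destruct (emb_spec y Hy) as [F3 _].
    split; intro H.
    + rewrite (target_E x y H) in F1. apply (E_trans B _ (target y)); auto. now apply E_sym.
    + apply target_injective; auto.
      apply (E_trans B _ (emb x)); auto. apply (E_trans B _ (emb y)); auto. now apply E_sym.
Qed.

Variable Y : natset.
Hypothesis HA : decidable2_in Y (E A).
Hypothesis HB : decidable2_in Y (E B).

Lemma computable_least_rep : computable_in Y least_rep.
Proof.
  apply computable_mu.
  - apply (decidable_or _ _ _ HA), decidable_not, (decidable_nfst _ (fun x => E A x x)).
    exact (decidable_E_diag A Y HA).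
  - intro x. destruct (classic (E A x x)); [exists x | exists 0]; auto.
Qed.

Lemma computable_class_size : computable_in (jump Y) class_size.
Proof.
  apply computable_mu.
  - apply decidable_or; [|apply decidable_or].
    + apply decidable_jump, (decidable_nfst _ (covered A Sp)), decidable_covered, HA.
    + apply decidable_jump, (decidable_nfst _ (fun x => ~ E A x x)), decidable_not.
      exact (decidable_E_diag A Y HA).
    + apply decidable_not.
      exact (decidable_app2 _ _ _ _ (decidable_class_ge A Y HA) (computable_nfst _)
               (computable_comp _ _ _ (computable_S _) (computable_nsnd _))).
  - intro x. destruct (classic (covered A Sp x)); [exists 0; auto|].
    destruct (classic (E A x x)) as [Hx|]; [|exists 0; auto].
    destruct (HSp x Hx H) as [[[|m] Hm] _]; [exfalso; apply Hm, class_ge0 | eauto].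
Qed.

Lemma decidable_is_rep : decidable_in Y is_rep.
Proof.
  apply decidable_and; [exact (decidable_E_diag A Y HA)|]. apply decidable_and.
  - exact (decidable_not _ _ (decidable_covered A Y Sp HA)).
  - exact (decidable_eq _ _ _ computable_least_rep (computable_id Y)).
Qed.

Lemma computable_next_fresh : computable_in (jump Y) next_fresh.
Proof.
  assert (Hfst_fst : forall Z, computable_in Z (fun z => nfst (nfst z))).
  { intro Z. exact (computable_comp _ _ _ (computable_nfst Z) (computable_nfst Z)). }
  apply computable_mu.
  - apply decidable_or.
    + apply decidable_jump, decidable_not.
      exact (decidable_comp _ _ _ decidable_is_rep (Hfst_fst Y)).
    + apply decidable_and.
      * apply decidable_le; [|apply computable_nsnd].
        exact (computable_comp _ _ _ (computable_nsnd _) (computable_nfst _)).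
      * apply (decidable_app2 _ _ _ _ (decidable_fresh_class Y B (map g Sp) HB));
          [apply computable_nsnd|].
        exact (computable_comp _ _ _ computable_class_size (Hfst_fst _)).
  - intro w. destruct (classic (is_rep (nfst w))) as [Hr|]; [|exists 0; auto].
    exists (next_fresh (npair (nfst w) (nsnd w))). right.
    now apply next_fresh_spec.
Qed.

Lemma computable_threshold : computable_in (jump Y) threshold.
Proof.
  set (step := fun z a => ifz (chi (is_rep (nsnd z))) (S (next_fresh (npair (nsnd z) a))) a).
  assert (Hstep : computable2_in (jump Y) step).
  { assert (Hsnd_fst : computable_in (jump Y) (fun z => nsnd (nfst z))).
    { exact (computable_comp _ _ _ (computable_nsnd _) (computable_nfst _)). }
    apply computable_ifz.
    - exact (decidable_comp _ _ _ (decidable_jump _ _ decidable_is_rep) Hsnd_fst).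
    - apply (computable_comp _ _ _ (computable_S _)), (computable_comp _ _ _ computable_next_fresh).
      exact (computable_npair _ _ _ Hsnd_fst (computable_nsnd _)).
    - apply computable_nsnd. }
  eapply computable_ext.
  { exact (computable_app2 _ _ _ _ (computable_primrec _ _ _ (computable_const _ 0) Hstep)
             (computable_const _ 0) (computable_id _)). }
  intro n. simpl. induction n as [|n IH]; [reflexivity|]. simpl. rewrite IH.
  unfold step, chi. rewrite nsnd_npair. now destruct (holds (is_rep n)).
Qed.

Lemma computable_target : computable_in (jump Y) target.
Proof.
  assert (Hrep : computable_in (jump Y) least_rep).
  { exact (computable_jump _ _ computable_least_rep). }
  apply (computable_ext _ (fun x => ifz (chi (covered A Sp x)) (special_image x)
                            (next_fresh (npair (least_rep x) (threshold (least_rep x)))))).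
  { apply computable_ifz.
    - exact (decidable_jump _ _ (decidable_covered A Y Sp HA)).
    - exact (computable_jump _ _ (computable_find_map _ _ g Sp HA)).
    - apply (computable_comp _ _ _ computable_next_fresh), (computable_npair _ _ _ Hrep).
      exact (computable_comp _ _ _ computable_threshold Hrep). }
  intro x. unfold target, chi. now destruct (holds (covered A Sp x)).
Qed.

Lemma computable_rank : computable_in Y rank.
Proof.
  exact (computable_app2 _ _ _ _ (computable_count Y _ HA) (computable_id Y) (computable_id Y)).
Qed.

Lemma computable_emb : computable_in (jump Y) emb.
Proof.
  assert (Htarget : computable_in (jump Y) (fun z => target (nfst z))).
  { exact (computable_comp _ _ _ computable_target (computable_nfst _)). }
  apply computable_mu.
  - apply decidable_or.
    + apply decidable_jump, (decidable_nfst _ (fun x => ~ E A x x)), decidable_not.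
      exact (decidable_E_diag A Y HA).
    + apply decidable_and.
      * exact (decidable_app2 _ _ _ _ (decidable_jump _ _ HB) Htarget (computable_nsnd _)).
      * apply decidable_eq.
        -- exact (computable_app2 _ _ _ _ (computable_jump _ _ (computable_count Y _ HB))
                    Htarget (computable_nsnd _)).
        -- exact (computable_comp _ _ _ (computable_jump _ _ computable_rank) (computable_nfst _)).
  - intro x. destruct (classic (E A x x)) as [Hx|]; [|exists 0; auto].
    exists (emb x). right. now apply emb_spec.
Qed.

End Construction.

Lemma delta02_embedding A B Y : finitely_many_infinite_classes A -> embeds A B ->
  decidable2_in Y (E A) -> decidable2_in Y (E B) ->
  exists f, is_embedding A B f /\ computable_in (jump Y) f.
Proof.
  intros Hfin [g Hg] HA HB. destruct (covers_exceptions_exists A B g Hg Hfin) as [Sp HSp].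
  exists (emb A B g Sp). split.
  - now apply emb_is_embedding.
  - now apply computable_emb.
Qed.

Lemma even_S_double n : Nat.even (S (2 * n)) = false.
Proof. now rewrite Nat.even_succ, <- Nat.negb_even, Nat.even_even. Qed.

Lemma computable_double Y f : computable_in Y f -> computable_in Y (fun x => 2 * f x).
Proof. intro H. eapply computable_ext; [exact (computable_add _ _ _ H H)|]. intro; simpl; lia. Qed.

(* In the join, [2 * (2 <x, y> + 1)] and [2 * (2 <x, y> + 1) + 1] code [x E_A y] and [x E_B y]. *)
Lemma decidable_E_join_l A B : decidable2_in (join (diag A) (diag B)) (E A).
Proof.
  eapply decidable_ext.
  { apply (decidable_oracle _ (fun z => 2 * S (2 * z))).
    apply computable_double, (computable_comp _ _ _ (computable_S _)).
    apply computable_double, computable_id. }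
  intro z. unfold join, diag.
  now rewrite Nat.even_even, Nat.div2_double, even_S_double, Nat.div2_succ_double.
Qed.

Lemma decidable_E_join_r A B : decidable2_in (join (diag A) (diag B)) (E B).
Proof.
  eapply decidable_ext.
  { apply (decidable_oracle _ (fun z => S (2 * S (2 * z)))).
    apply (computable_comp _ _ _ (computable_S _)), computable_double.
    apply (computable_comp _ _ _ (computable_S _)), computable_double, computable_id. }
  intro z. unfold join, diag.
  now rewrite even_S_double, Nat.div2_succ_double, even_S_double, Nat.div2_succ_double.
Qed.

Theorem theorem3p1 (A : eqstr) :
  finitely_many_infinite_classes A -> rel_delta02_bi_emb_categorical A.
Proof.
  intros Hfin B [HAB [g Hg]]. split.
  - exact (delta02_embedding A B _ Hfin HAB (decidable_E_join_l A B) (decidable_E_join_r A B)).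
  - apply delta02_embedding; [| now exists g | apply decidable_E_join_r | apply decidable_E_join_l].
    exact (finitely_many_infinite_classes_embedding B A g Hg Hfin).
Qed.
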